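(* Let $\bm v_1,\dots,\bm v_N\in\mathbb{S}^{r-1}$ form a unit norm tight frame, let $\bm V\in\mathbb{R}^{r\times N}$ have the $\bm v_i$ as columns, $\bm X := \bm V^\top\bm V$, and suppose the matrices $\bm v_1\bm v_1^\top,\dots,\bm v_N\bm v_N^\top$ are linearly independent (equivalently, $\bm X^{\odot 2}$ is nonsingular). Let $$V'_{\mathrm{sym}} := \{\mathrm{vec}(\bm S\bm V):\bm S\in\mathbb{R}^{r\times r}_{\mathrm{sym}},\ \bm v_i^\top\bm S\bm v_i = 0\ \forall i\in[N]\}.$$ Then the orthogonal projection matrix $\bm P_{V'_{\mathrm{sym}}}\in\mathbb{R}^{rN\times rN}$ has blocks $$(\bm P_{V'_{\mathrm{sym}}})_{[ij]} = \frac{r}{N}\Big(\tfrac12\langle\bm v_i,\bm v_j\rangle\bm I_r + \tfrac12\bm v_j\bm v_i^\top - \sum_{k=1}^N\sum_{\ell=1}^N\big((\bm X^{\odot2})^{-1}\big)_{k\ell}\langle\bm v_i,\bm v_k\rangle\langle\bm v_j,\bm v_\ell\rangle\bm v_k\bm v_\ell^\top\Big).$$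
   Context: Unit vectors $\bm v_1,\dots,\bm v_N\in\mathbb{R}^r$ form a unit norm tight frame if $\sum_i\bm v_i\bm v_i^\top = \frac{N}{r}\bm I_r$. $\mathrm{vec}(\bm V) = (\bm v_1;\dots;\bm v_N)\in\mathbb{R}^{rN}$. $\bm X^{\odot 2}$ is the entrywise square of $\bm X$. Matrices in $\mathbb{R}^{rN\times rN}$ are viewed as $N\times N$ arrays of $r\times r$ blocks, $(i,j)$ block written $(\cdot)_{[ij]}$. *)

From HB Require Import structures.
From mathcomp Require Import all_boot all_order all_algebra.
Set Implicit Arguments. Unset Strict Implicit. Unset Printing Implicit Defensive.
Import Order.TTheory GRing.Theory Num.Theory.
Local Open Scope ring_scope.

Section Defs.
Variables (R : realFieldType) (r N : nat).

Definition vcol (V : 'M[R]_(r, N)) (i : 'I_N) : 'cV[R]_r := col i V.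

Definition ip (x y : 'cV[R]_r) : R := (x^T *m y) 0 0.

Definition UNTF (V : 'M[R]_(r, N)) : Prop :=
  (forall i, ip (vcol V i) (vcol V i) = 1) /\
  \sum_(i < N) (vcol V i *m (vcol V i)^T) = (N%:R / r%:R) *: 1%:M.

Definition outer_lin_indep (V : 'M[R]_(r, N)) : Prop :=
  forall c : 'I_N -> R,
    \sum_(i < N) c i *: (vcol V i *m (vcol V i)^T) = 0 -> forall i, c i = 0.

(* indices of R^{rN}: index k corresponds to (block i, position a) *)
Definition unindex (k : 'I_(N * r)) : 'I_N * 'I_r :=
  enum_val (cast_ord (esym (mxvec_cast N r)) k).

(* vec(M) = (m_1; ...; m_N) stacking the columns of M *)
Definition vecm (M : 'M[R]_(r, N)) : 'cV[R]_(N * r) :=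
  \col_k M (unindex k).2 (unindex k).1.

Definition Vsym' (V : 'M[R]_(r, N)) (x : 'cV[R]_(N * r)) : Prop :=
  exists S : 'M[R]_r, S^T = S /\
    (forall i, ((vcol V i)^T *m S *m vcol V i) 0 0 = 0) /\
    x = vecm (S *m V).

Definition is_orth_proj (W : 'cV[R]_(N * r) -> Prop) (P : 'M[R]_(N * r)) : Prop :=
  forall x, W (P *m x) /\ (forall w, W w -> (w^T *m (x - P *m x)) 0 0 = 0).

Definition Gram (V : 'M[R]_(r, N)) : 'M[R]_N := V^T *m V.

Definition Pblock (V : 'M[R]_(r, N)) (i j : 'I_N) : 'M[R]_r :=
  let v := vcol V in
  let Y := invmx (map_mx (fun x => x ^+ 2) (Gram V)) in
  (r%:R / N%:R) *:
    ((2^-1 * ip (v i) (v j)) *: 1%:M + 2^-1 *: (v j *m (v i)^T)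
     - \sum_(k < N) \sum_(l < N)
         (Y k l * ip (v i) (v k) * ip (v j) (v l)) *: (v k *m (v l)^T)).

Definition Pmat (V : 'M[R]_(r, N)) : 'M[R]_(N * r) :=
  \matrix_(p, q) Pblock V (unindex p).1 (unindex q).1 (unindex p).2 (unindex q).2.

End Defs.

From HB Require Import structures.
From mathcomp Require Import all_boot all_order all_algebra ring.
Set Implicit Arguments. Unset Strict Implicit. Unset Printing Implicit Defensive.
Import Order.TTheory GRing.Theory Num.Theory.
Local Open Scope ring_scope.

(* Write x = vec(Y) and A := sym(Y V^T). Then P x = vec((r/N) Pi(A) V), where
   Pi(A) = A - sum_k c_k v_k v_k^T and c = (X^{o2})^{-1} (v_l^T A v_l)_l; the
   coefficients are chosen so that v_l^T Pi(A) v_l = 0, since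
   v_l^T (v_k v_k^T) v_l is the (l,k) entry of X^{o2}. So P x lies in V'_sym.
   For S in V'_sym, tr(S v_k v_k^T) = v_k^T S v_k = 0, hence tr(S Pi(A)) =
   tr(S A); with V V^T = (N/r) I this gives <SV, P x> = tr(S A) = <SV, Y>. *)

Section Vectorization.
Variables (R : realFieldType) (r N : nat).

Definition index_of (u : 'I_N * 'I_r) : 'I_(N * r) :=
  cast_ord (mxvec_cast N r) (enum_rank u).

Lemma index_ofK : cancel index_of (@unindex r N).
Proof. by move=> u; rewrite /unindex /index_of cast_ordK enum_rankK. Qed.

Lemma unindexK : cancel (@unindex r N) index_of.
Proof. by move=> k; rewrite /unindex /index_of enum_valK cast_ordKV. Qed.

Lemma sum_unindex (F : 'I_N -> 'I_r -> R) :
  \sum_(k < N * r) F (unindex k).1 (unindex k).2 = \sum_(i < N) \sum_(a < r) F i a.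
Proof.
rewrite (reindex index_of) /=; last by exists (@unindex r N) => u _;
  [exact: index_ofK | exact: unindexK].
by rewrite pair_big /=; apply: eq_bigr => u _; rewrite index_ofK.
Qed.

Lemma vecm_surj (x : 'cV[R]_(N * r)) : exists Y : 'M[R]_(r, N), x = vecm Y.
Proof.
exists (\matrix_(a, i) x (index_of (i, a)) 0).
by apply/colP => k; rewrite !mxE; case: (unindex k) (unindexK k) => i a /= ->.
Qed.

Lemma vecmB (A B : 'M[R]_(r, N)) : vecm (A - B) = vecm A - vecm B.
Proof. by apply/colP => k; rewrite !mxE. Qed.

Lemma vecm_dotE (A B : 'M[R]_(r, N)) :
  ((vecm A)^T *m vecm B) 0 0 = \tr (A^T *m B).
Proof.
rewrite mxE (eq_bigr (fun k => A (unindex k).2 (unindex k).1 * B (unindex k).2 (unindex k).1));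
  last by move=> k _; rewrite !mxE.
rewrite (sum_unindex (fun i a => A a i * B a i)); apply: eq_bigr => i _.
by rewrite mxE; apply: eq_bigr => a _; rewrite mxE.
Qed.

Lemma mul_blockmx_vecm (B : 'I_N -> 'I_N -> 'M[R]_r) (Y : 'M[R]_(r, N)) :
  (\matrix_(p, q) B (unindex p).1 (unindex q).1 (unindex p).2 (unindex q).2) *m vecm Y
  = vecm (\matrix_(a, i) (\sum_(j < N) B i j *m col j Y) a 0).
Proof.
apply/colP => p; rewrite !mxE.
rewrite (eq_bigr (fun q => B (unindex p).1 (unindex q).1 (unindex p).2 (unindex q).2
                           * Y (unindex q).2 (unindex q).1)); last by move=> q _; rewrite !mxE.
rewrite (sum_unindex (fun j b => B (unindex p).1 j (unindex p).2 b * Y b j)) summxE.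
by apply: eq_bigr => j _; rewrite mxE; apply: eq_bigr => b _; rewrite mxE.
Qed.

End Vectorization.

Section MatrixFacts.
Variables (R : realFieldType) (r : nat).

Lemma ipE (x y : 'cV[R]_r) : ip x y = \sum_c x c 0 * y c 0.
Proof. by rewrite /ip mxE; apply: eq_bigr => c _; rewrite mxE. Qed.

Lemma ipC (x y : 'cV[R]_r) : ip x y = ip y x.
Proof. by rewrite !ipE; apply: eq_bigr => c _; rewrite mulrC. Qed.

Lemma mul_outer (u w z : 'cV[R]_r) : (u *m w^T) *m z = ip w z *: u.
Proof. by rewrite -mulmxA [w^T *m z]mx11_scalar mul_mx_scalar. Qed.

Lemma trmx_outer (u : 'cV[R]_r) : (u *m u^T)^T = u *m u^T.
Proof. by rewrite trmx_mul trmxK. Qed.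

Lemma trmx_mul_colE n (M : 'M[R]_(r, n)) (w : 'cV[R]_r) j :
  (M^T *m w) j 0 = ip (col j M) w.
Proof. by rewrite ipE mxE; apply: eq_bigr => c _; rewrite !mxE. Qed.

Lemma mulmx_colE m n (M : 'M[R]_(m, n)) (w : 'cV[R]_n) :
  M *m w = \sum_j w j 0 *: col j M.
Proof.
by apply/colP => a; rewrite !mxE summxE; apply: eq_bigr => j _; rewrite !mxE mulrC.
Qed.

Lemma sym_mxtrace_sqr_eq0 (M : 'M[R]_r) : M^T = M -> \tr (M *m M) = 0 -> M = 0.
Proof.
move=> sM trM0.
have sum_sq0 : \sum_a \sum_b M a b ^+ 2 = 0.
  rewrite -[RHS]trM0 /mxtrace; apply: eq_bigr => a _; rewrite mxE; apply: eq_bigr => b _.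
  by rewrite expr2; congr (_ * _); rewrite -{1}sM mxE.
apply/matrixP => a b; rewrite mxE; apply/eqP; rewrite -sqrf_eq0; apply/eqP.
have row_sq0 := psumr_eq0P (P := predT)
  (fun a _ => sumr_ge0 _ (fun b _ => sqr_ge0 (M a b))) sum_sq0 (isT : predT a).
exact: (psumr_eq0P (P := predT) (fun b _ => sqr_ge0 (M a b)) row_sq0 (isT : predT b)).
Qed.

Lemma mulr_half_double (x : R) : 2^-1 * (x + x) = x.
Proof. by field. Qed.

End MatrixFacts.

Section Frame.
Variables (R : realFieldType) (r N : nat) (V : 'M[R]_(r, N)).
Local Notation v := (vcol V).

Definition Gram2 : 'M[R]_N := map_mx (fun x => x ^+ 2) (Gram V).

Definition symYV (Y : 'M[R]_(r, N)) : 'M[R]_r := 2^-1 *: (Y *m V^T + V *m Y^T).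

Definition frame_form (A : 'M[R]_r) (l : 'I_N) : R := ((v l)^T *m A *m v l) 0 0.

Definition frame_null (A : 'M[R]_r) : 'M[R]_r :=
  A - \sum_(k < N) \sum_(l < N) (invmx Gram2 k l * frame_form A l) *: (v k *m (v k)^T).

Lemma Gram2E k l : Gram2 k l = ip (v k) (v l) ^+ 2.
Proof.
rewrite mxE /Gram ipE mxE; congr (_ ^+ 2).
by apply: eq_bigr => c _; rewrite !mxE.
Qed.

Lemma frame_formB A B l : frame_form (A - B) l = frame_form A l - frame_form B l.
Proof. by rewrite /frame_form mulmxBr mulmxBl !mxE. Qed.

Lemma frame_formZ a A l : frame_form (a *: A) l = a * frame_form A l.
Proof. by rewrite /frame_form -scalemxAr -scalemxAl mxE. Qed.

Lemma frame_form_sum (F : 'I_N -> 'M[R]_r) l :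
  frame_form (\sum_k F k) l = \sum_k frame_form (F k) l.
Proof. by rewrite /frame_form mulmx_sumr mulmx_suml summxE. Qed.

Lemma frame_form_outer k l : frame_form (v k *m (v k)^T) l = Gram2 l k.
Proof. by rewrite /frame_form -mulmxA mul_outer -scalemxAr mxE Gram2E ipC expr2. Qed.

Lemma mxtrace_mul_outer (S : 'M[R]_r) k : \tr (S *m (v k *m (v k)^T)) = frame_form S k.
Proof. by rewrite mulmxA mxtrace_mulC mulmxA /mxtrace big_ord1. Qed.

Lemma mulmx_trmx_outer_sum : V *m V^T = \sum_i v i *m (v i)^T.
Proof.
apply/matrixP => a b; rewrite !mxE summxE.
by apply: eq_bigr => i _; rewrite !mxE big_ord1 !mxE.
Qed.

Lemma mxtrace_mul_frame_null (S A : 'M[R]_r) :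
  (forall l, frame_form S l = 0) -> \tr (S *m frame_null A) = \tr (S *m A).
Proof.
move=> formS0; rewrite /frame_null mulmxBr raddfB /=.
suff -> : \tr (S *m \sum_k \sum_l (invmx Gram2 k l * frame_form A l) *: (v k *m (v k)^T)) = 0.
  by rewrite subr0.
rewrite mulmx_sumr raddf_sum; apply: big1 => k _.
rewrite mulmx_sumr raddf_sum; apply: big1 => l _.
by rewrite /= -scalemxAr mxtraceZ mxtrace_mul_outer formS0 mulr0.
Qed.

Lemma Gram2_unit : outer_lin_indep V -> Gram2 \in unitmx.
Proof.
move=> li; rewrite -row_free_unit -kermx_eq0; apply/eqP/row_matrixP => k; rewrite row0.
set u := row k (kermx Gram2).
have uG0 : u *m Gram2 = 0 by apply/sub_kermxP; exact: row_sub.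
set M := \sum_l u 0 l *: (v l *m (v l)^T).
have formM0 l : frame_form M l = 0.
  transitivity ((u *m Gram2) 0 l); last by rewrite uG0 mxE.
  rewrite frame_form_sum mxE.
  by apply: eq_bigr => j _; rewrite frame_formZ frame_form_outer !Gram2E ipC.
have sM : M^T = M.
  by rewrite linear_sum; apply: eq_bigr => l _; rewrite linearZ /= trmx_outer.
have trMM0 : \tr (M *m M) = 0.
  rewrite {2}/M mulmx_sumr raddf_sum /= big1 // => l _.
  by rewrite -scalemxAr mxtraceZ mxtrace_mul_outer formM0 mulr0.
apply/rowP => l; rewrite [RHS]mxE.
exact: li (fun l => u 0 l) (sym_mxtrace_sqr_eq0 sM trMM0) l.
Qed.

Lemma frame_form_null A l : Gram2 \in unitmx -> frame_form (frame_null A) l = 0.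
Proof.
move=> uG; rewrite frame_formB frame_form_sum.
set q := \col_j frame_form A j.
suff -> : \sum_k frame_form (\sum_j (invmx Gram2 k j * frame_form A j) *: (v k *m (v k)^T)) l
          = (Gram2 *m (invmx Gram2 *m q)) l 0.
  by rewrite mulmxA mulmxV // mul1mx mxE subrr.
rewrite mxE; apply: eq_bigr => k _; rewrite frame_form_sum [(_ *m q) k 0]mxE mulr_sumr.
apply: eq_bigr => j _; rewrite frame_formZ frame_form_outer !mxE; ring.
Qed.

Lemma trmx_symYV Y : (symYV Y)^T = symYV Y.
Proof. by rewrite /symYV linearZ /= linearD /= !trmx_mul !trmxK addrC. Qed.

Lemma trmx_frame_null A : A^T = A -> (frame_null A)^T = frame_null A.
Proof.
move=> sA; rewrite /frame_null linearB /= sA linear_sum /=; congr (_ - _).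
apply: eq_bigr => k _; rewrite linear_sum; apply: eq_bigr => l _.
by rewrite linearZ /= trmx_outer.
Qed.

Lemma symYV_mul Y i : symYV Y *m v i =
  2^-1 *: (\sum_j ip (v j) (v i) *: col j Y + \sum_j ip (col j Y) (v i) *: v j).
Proof.
rewrite /symYV -scalemxAl mulmxDl -!mulmxA (mulmx_colE Y) (mulmx_colE V).
by congr (_ *: (_ + _)); apply: eq_bigr => j _; rewrite trmx_mul_colE.
Qed.

Lemma frame_form_symYV Y l :
  frame_form (symYV Y) l = \sum_j ip (v j) (v l) * ip (v l) (col j Y).
Proof.
rewrite /frame_form -mulmxA symYV_mul -scalemxAr mulmxDr !mulmx_sumr !mxE !summxE.
rewrite -[RHS]mulr_half_double; congr (_ * (_ + _)); apply: eq_bigr => j _;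
  rewrite -scalemxAr mxE //.
by rewrite mulrC ipC [ip (v j) _]ipC.
Qed.

Lemma Pblock_mul i j (y : 'cV[R]_r) : Pblock V i j *m y = (r%:R / N%:R) *:
  ((2^-1 * ip (v i) (v j)) *: y + 2^-1 *: (ip (v i) y *: v j)
   - \sum_(k < N) \sum_(l < N)
       (invmx Gram2 k l * ip (v i) (v k) * ip (v j) (v l) * ip (v l) y) *: v k).
Proof.
rewrite /Pblock /= -scalemxAl mulmxBl mulmxDl -!scalemxAl mul1mx mul_outer mulmx_suml.
congr (_ *: (_ + _ - _)); apply: eq_bigr => k _; rewrite mulmx_suml.
by apply: eq_bigr => l _; rewrite -scalemxAl mul_outer scalerA.
Qed.

Lemma sum_Pblock_col Y i :
  \sum_j Pblock V i j *m col j Y = (r%:R / N%:R) *: (frame_null (symYV Y) *m v i).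
Proof.
under eq_bigr do rewrite Pblock_mul.
rewrite -scaler_sumr; congr (_ *: _).
rewrite /frame_null mulmxBl symYV_mul mulmx_suml sumrB big_split /= scalerDr -!scaler_sumr.
congr (_ + _ - _).
- by rewrite scaler_sumr; apply: eq_bigr => j _; rewrite scalerA ipC.
- by congr (_ *: _); apply: eq_bigr => j _; rewrite ipC.
under [RHS]eq_bigr do rewrite mulmx_suml.
rewrite exchange_big /=; apply: eq_bigr => k _.
rewrite exchange_big /=; apply: eq_bigr => l _.
rewrite -scalemxAl mul_outer scalerA frame_form_symYV mulr_sumr mulr_suml scaler_suml.
by apply: eq_bigr => j _; congr (_ *: _); rewrite [ip (v k) (v i)]ipC; ring.
Qed.

Lemma Pmat_vecm Y :
  Pmat V *m vecm Y = vecm ((r%:R / N%:R) *: (frame_null (symYV Y) *m V)).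
Proof.
rewrite /Pmat mul_blockmx_vecm; congr vecm; apply/matrixP => a i.
rewrite mxE sum_Pblock_col !mxE; congr (_ * _).
by apply: eq_bigr => b _; rewrite [v i b 0]mxE.
Qed.

Lemma Pmat_vecm_Vsym' Y : Gram2 \in unitmx -> Vsym' V (Pmat V *m vecm Y).
Proof.
move=> uG; rewrite Pmat_vecm scalemxAl.
exists ((r%:R / N%:R) *: frame_null (symYV Y)); split.
  by rewrite linearZ /= trmx_frame_null ?trmx_symYV.
by split=> // i; rewrite -/(frame_form _ i) frame_formZ frame_form_null ?mulr0.
Qed.

Lemma mxtrace_residual_eq0 (S : 'M[R]_r) Y :
  V *m V^T = (N%:R / r%:R) *: 1%:M -> N%:R != 0 :> R -> r%:R != 0 :> R ->
  S^T = S -> (forall l, frame_form S l = 0) ->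
  \tr ((S *m V)^T *m (Y - (r%:R / N%:R) *: (frame_null (symYV Y) *m V))) = 0.
Proof.
move=> tight Nn0 rn0 sS formS0.
have tr_proj : \tr ((S *m V)^T *m ((r%:R / N%:R) *: (frame_null (symYV Y) *m V)))
               = \tr (S *m frame_null (symYV Y)).
  rewrite -scalemxAr mxtraceZ trmx_mul sS !mulmxA mxtrace_mulC !mulmxA -mulmxA tight.
  rewrite -scalemxAl mul1mx mxtraceZ mulrA.
  have -> : r%:R / N%:R * (N%:R / r%:R) = 1 :> R by field; apply/andP.
  by rewrite mul1r.
have tr_sym : \tr (S *m symYV Y) = \tr ((S *m V)^T *m Y).
  rewrite /symYV -scalemxAr mulmxDr mxtraceZ mxtraceD.
  have -> : \tr (S *m (Y *m V^T)) = \tr ((S *m V)^T *m Y).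
    by rewrite mulmxA mxtrace_mulC trmx_mul sS mulmxA.
  have -> : \tr (S *m (V *m Y^T)) = \tr ((S *m V)^T *m Y).
    by rewrite mulmxA -mxtrace_tr trmx_mul trmxK mxtrace_mulC.
  exact: mulr_half_double.
by rewrite mulmxBr raddfB /= tr_proj mxtrace_mul_frame_null // tr_sym subrr.
Qed.

End Frame.

Theorem proposition13 (R : realFieldType) (r N : nat) (V : 'M[R]_(r, N)) :
  UNTF V -> outer_lin_indep V ->
  is_orth_proj (Vsym' V) (Pmat V).
Proof.
move=> [unit_norm tight] li x.
have [Y ->] := vecm_surj x.
split; first exact/Pmat_vecm_Vsym'/Gram2_unit.
move=> w [S [sS [formS0 ->]]].
rewrite Pmat_vecm -vecmB vecm_dotE.
have [N0 | N_gt0] := posnP N; first by subst N; rewrite /mxtrace big_ord0.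
have r_gt0 : (0 < r)%N.
  rewrite lt0n; apply/eqP => r0; subst r.
  by have := unit_norm (Ordinal N_gt0); rewrite ipE big_ord0 => /eqP; rewrite eq_sym oner_eq0.
by apply: mxtrace_residual_eq0; rewrite ?mulmx_trmx_outer_sum ?pnatr_eq0 -?lt0n.
Qed.
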